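(* Let $k\in[n-1]$, $w\in S_n^{k\searrow}$ and $k'\le k$ with $k'\in[n-1]$. If $u\in S_n$ satisfies $u\le_{k'}w$, then $u\in S_n^{k\searrow}$.
   Context: Permutations in one-line notation; for $i<j$, $wt_{i,j}$ is $w$ with positions $i,j$ swapped; $\ell$ is the number of inversions. $u\lessdot w$ iff $w=ut_{i,j}$ for some $i<j$ and $\ell(w)=\ell(u)+1$; $u\lessdot_{k'}w$ iff moreover $i\le k'<j$; $\le_{k'}$ is the $k'$-Bruhat order, the reflexive-transitive closure of $\lessdot_{k'}$. For $k\in\{0,\dots,n-1\}$, $S_n^{k\searrow}=\{v\in S_n: v(k+1)>v(k+2)>\dots>v(n)\}$. *)

From mathcomp Require Import all_boot all_order all_fingroup.
Set Implicit Arguments. Unset Strict Implicit. Unset Printing Implicit Defensive.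

(* Conventions: a permutation w of {1..n} is modelled as w : 'S_n = {perm 'I_n};
   position p (1-indexed) corresponds to the ordinal p-1, and the value w(p)
   corresponds to (w (p-1)) + 1.  This shift preserves all comparisons. *)

(* w t_{i,j}: w with positions i and j swapped, i.e. p |-> w (t_{i,j} p).
   In mathcomp, (s * t) x = t (s x), so this is tperm i j * w. *)
Definition swap_pos n (w : 'S_n) (i j : 'I_n) : 'S_n := (tperm i j * w)%g.

Definition ell n (w : 'S_n) : nat :=
  #|[set pq : 'I_n * 'I_n | (pq.1 < pq.2) && (w pq.2 < w pq.1)]|.

(* u <._{k'} w  (k' a 1-indexed cut position): w = u t_{i,j} with
   i <= k' < j in 1-indexed positions, i.e. i0 < k' <= j0 for ordinals. *)
Definition kcover n (k' : nat) (u w : 'S_n) : Prop :=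
  exists i j : 'I_n,
    [/\ (i < k')%N, (k' <= j)%N, w = swap_pos u i j & ell w = (ell u).+1].

Inductive kle n (k' : nat) : 'S_n -> 'S_n -> Prop :=
| kle_refl u : kle k' u u
| kle_step u v w : kcover k' u v -> kle k' v w -> kle k' u w.

(* v in S_n^{k\searrow}: v(k+1) > v(k+2) > ... > v(n) (1-indexed positions),
   i.e. v is decreasing on the ordinals k, ..., n-1. *)
Definition desc_after n (k : nat) (v : 'S_n) : Prop :=
  forall p q : 'I_n, (k <= p)%N -> (p < q)%N -> (v q < v p)%N.

(* Swapping the positions i < j of x with x i < x j raises the number of
   inversions by 1 + 2m, where m counts the positions strictly between i and j
   whose values lie strictly between x i and x j: moving both entries of a
   pair by t_{i,j}, unless one of them lies strictly between i and j, injects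
   the inversions of x into those of the swapped permutation.  Hence in a
   cover u <._{k'} v = u t_{i,j} we have u i < u j and no such intermediate
   position.  As i < k' <= k, passing from v back to u changes the tail
   (positions >= k) at most at j, where the value grows from u i to u j; the
   tail stays decreasing because no tail position p < j has u i < u p < u j. *)

From mathcomp Require Import all_boot all_order all_fingroup.
From mathcomp Require Import zify.
Set Implicit Arguments. Unset Strict Implicit. Unset Printing Implicit Defensive.

Section Inversions.

Variable n : nat.
Implicit Types (x : 'S_n) (i j p : 'I_n) (z : 'I_n * 'I_n).

Definition inv_set x :=
  [set z : 'I_n * 'I_n | (z.1 < z.2)%N && (x z.2 < x z.1)%N].

Lemma swap_posE x i j p : swap_pos x i j p = x (tperm i j p).
Proof. by rewrite /swap_pos permM. Qed.

Lemma swap_posK x i j : swap_pos (swap_pos x i j) i j = x.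
Proof. by rewrite /swap_pos mulgA tperm2 mul1g. Qed.

Definition swap_pair i j z :=
  if (i < z.1 < j)%N || (i < z.2 < j)%N then z
  else (tperm i j z.1, tperm i j z.2).

Lemma between_tperm i j p : (i < j)%N ->
  (i < tperm i j p < j)%N = (i < p < j)%N.
Proof. by move=> ij; case: tpermP => [->|->|_ _] //; lia. Qed.

Lemma swap_pairK i j : (i < j)%N -> involutive (swap_pair i j).
Proof.
move=> ij [a b]; rewrite /swap_pair /=.
case between: ((i < a < j)%N || (i < b < j)%N); first by rewrite /= between.
by rewrite /= !between_tperm // between !tpermK.
Qed.

Lemma ord_val_neq i j : i <> j -> (i : nat) <> j.
Proof. by move=> neq_ij eq_ij; apply/neq_ij/val_inj. Qed.

Lemma swap_pair_inv_set x i j : (i < j)%N -> (x i < x j)%N ->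
  swap_pair i j @: inv_set x \subset inv_set (swap_pos x i j).
Proof.
move=> ij xij; apply/subsetP => _ /imsetP [[a b] + ->].
rewrite !inE /swap_pair /= => /andP [ab xab].
case: ifP => between /=; rewrite !swap_posE ?tpermK ?xab ?andbT;
  case: (tpermP i j a) => [Ea|Ea|Ea1 Ea2]; case: (tpermP i j b) => [Eb|Eb|Eb1 Eb2];
  subst; rewrite ?ab //=;
  try move: (ord_val_neq Ea1) (ord_val_neq Ea2);
  try move: (ord_val_neq Eb1) (ord_val_neq Eb2); lia.
Qed.

Lemma ell_swap_ge x i j (S : {set 'I_n * 'I_n}) : (i < j)%N -> (x i < x j)%N ->
  (forall z, z \in S ->
     z \in inv_set (swap_pos x i j) /\ swap_pair i j z \notin inv_set x) ->
  (ell x + #|S| <= ell (swap_pos x i j))%N.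
Proof.
move=> ij xij new_inv.
have card_img : #|swap_pair i j @: inv_set x| = ell x.
  by rewrite card_imset //; apply: can_inj (swap_pairK ij).
have disj : [disjoint swap_pair i j @: inv_set x & S].
  apply/pred0P => z /=; apply/andP => -[/imsetP [z' z'_inv ->] /new_inv [_]].
  by rewrite swap_pairK // z'_inv.
have sub : swap_pair i j @: inv_set x :|: S \subset inv_set (swap_pos x i j).
  rewrite subUset swap_pair_inv_set //=.
  by apply/subsetP => z /new_inv [].
have /eqP <- : #|swap_pair i j @: inv_set x :|: S| == ell x + #|S|.
  by rewrite -card_img (leq_card_setU _ _).2.
exact: subset_leq_card sub.
Qed.

Lemma ell_swap_gt x i j : (i < j)%N -> (x i < x j)%N ->
  (ell x < ell (swap_pos x i j))%N.
Proof.
move=> ij xij; have := ell_swap_ge (S := [set (i, j)]) ij xij.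
rewrite cards1 addn1; apply=> z; rewrite !inE => /eqP -> /=.
rewrite !swap_posE tpermL tpermR /swap_pair /= !ltnn andbF /= tpermL tpermR.
lia.
Qed.

Lemma ell_swap_between x i j p : (i < p < j)%N -> (x i < x p < x j)%N ->
  (ell x + 3 <= ell (swap_pos x i j))%N.
Proof.
move=> ipj xipj; have ij : (i < j)%N by lia.
have [ip jp] : i != p /\ j != p by split; apply/eqP => E; move: ipj; rewrite E; lia.
have card3 : #|[set (i, j); (i, p); (p, j)]| = 3.
  by rewrite -setUA cardsU1 cards2 !inE !xpair_eqE !eqxx (negbTE ip) (negbTE jp).
rewrite -card3; apply: ell_swap_ge ij _ _; first by lia.
move=> z; rewrite !inE => /orP [/orP [/eqP->|/eqP->]|/eqP->];
  rewrite /swap_pair /= !swap_posE ?tpermL ?tpermR ?(tpermD ip jp) /=;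
  case: ifP => between /=; rewrite ?tpermL ?tpermR ?(tpermD ip jp); lia.
Qed.

Lemma swap_cover_lt x i j : (i < j)%N ->
  ell (swap_pos x i j) = (ell x).+1 -> (x i < x j)%N.
Proof.
move=> ij cover; case: (ltngtP (x i) (x j)) => // [xji|/val_inj/perm_inj eq_ij].
  have := ell_swap_gt (x := swap_pos x i j) ij.
  by rewrite swap_posK !swap_posE tpermL tpermR cover => /(_ xji); lia.
by move: ij; rewrite eq_ij ltnn.
Qed.

Lemma swap_cover_no_between x i j p : (i < p < j)%N ->
  ell (swap_pos x i j) = (ell x).+1 -> ~~ (x i < x p < x j)%N.
Proof.
move=> ipj cover; apply/negP => /(ell_swap_between ipj).
by rewrite cover; lia.
Qed.

End Inversions.

Lemma kcover_desc_after n k k' (u v : 'S_n) : (k' <= k)%N -> kcover k' u v ->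
  desc_after k v -> desc_after k u.
Proof.
move=> k'k [i [j [ik' k'j -> cover]]] desc_v p q kp pq.
have ij : (i < j)%N by lia.
have uij := swap_cover_lt ij cover.
have := desc_v p q kp pq; rewrite !swap_posE.
case: (tpermP i j p) => [Ep|Ep|Ep1 Ep2]; case: (tpermP i j q) => [Eq|Eq|Eq1 Eq2];
  subst; try lia.
(* Only q = j remains, with p a tail position strictly between i and j. *)
move=> u_ip; case: (ltngtP (u p) (u j)) => // [upj|/val_inj/perm_inj //].
have ipj : (i < p < j)%N by lia.
by move: (swap_cover_no_between ipj cover); rewrite u_ip upj.
Qed.

Theorem lemma3p7 (n k k' : nat) (w u : 'S_n) :
  (1 <= k)%N -> (k <= n - 1)%N ->
  (1 <= k')%N -> (k' <= n - 1)%N -> (k' <= k)%N ->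
  desc_after k w -> kle k' u w -> desc_after k u.
Proof.
move=> _ _ _ _ k'k desc_w kle_uw.
elim: kle_uw desc_w => // u0 v w0 cover _ IH /IH.
exact: kcover_desc_after k'k cover.
Qed.
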